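(* Let $A\in\mathbb{R}^{m\times n}$, $b\in\mathbb{R}^m$, $\delta\ge0$ with $\{x:\|Ax-b\|\le\delta\}\neq\emptyset$. Then the exact penalty decomposition method described in the context, with parameters $\epsilon>0$, $\sigma>1$, $\rho_0>0$, terminates after at most $\left\lceil\frac{\ln(n)-\ln(\epsilon\rho_0)}{\ln\sigma}\right\rceil$ iterations.
   Context: Exact penalty decomposition method: (S.0) Given a tolerance $\epsilon>0$ and a ratio $\sigma>1$, choose $\rho_0>0$, set $v^0=e$ (the all-ones vector in $\mathbb{R}^n$) and $k:=0$. (S.1) Choose $x^{k+1}\in\arg\min_{x\in\mathbb{R}^n}\{\langle v^k,|x|\rangle:\ \|Ax-b\|\le\delta\}$. (S.2) For each $i$, set $v^{k+1}_i=0$ if $|x^{k+1}_i|>1/\rho_k$ and $v^{k+1}_i=1$ otherwise. (S.3) If $\langle v^{k+1},|x^{k+1}|\rangle\le\epsilon$, stop; otherwise go to (S.4). (S.4) Set $\rho_{k+1}=\sigma\rho_k$, $k:=k+1$, and go to (S.1). Here $\|\cdot\|$ is the Euclidean norm and $|x|$ the componentwise absolute value. *)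

From mathcomp Require Import all_boot all_order all_algebra.
From mathcomp Require Import all_classical all_reals all_analysis.
Set Implicit Arguments. Unset Strict Implicit. Unset Printing Implicit Defensive.
Import Order.TTheory GRing.Theory Num.Theory.
Local Open Scope ring_scope.

Definition enorm (R : realType) (m : nat) (y : 'cV[R]_m) : R :=
  Num.sqrt (\sum_(i < m) (y i 0) ^+ 2).

Definition feasible (R : realType) (m n : nat) (A : 'M[R]_(m, n)) (b : 'cV[R]_m)
  (delta : R) (x : 'cV[R]_n) : Prop :=
  enorm (A *m x - b) <= delta.

Definition wl1 (R : realType) (n : nat) (v x : 'cV[R]_n) : R :=
  \sum_(i < n) v i 0 * `|x i 0|.

(* The iterates are
   computed regardless of the stopping test (S.3); termination is then
   the first index k at which the test holds. *)
Definition EPD_run (R : realType) (m n : nat) (A : 'M[R]_(m, n)) (b : 'cV[R]_m)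
  (delta sigma rho0 : R) (x v : nat -> 'cV[R]_n) (rho : nat -> R) : Prop :=
  [/\ v 0%N = const_mx 1,
      (forall k, rho k = rho0 * sigma ^+ k),
      (forall k, feasible A b delta (x k.+1) /\
                 forall y, feasible A b delta y -> wl1 (v k) (x k.+1) <= wl1 (v k) y) &
      (forall k (i : 'I_n), v k.+1 i 0 = if `|x k.+1 i 0| > (rho k)^-1 then 0 else 1)].

Definition EPD_stops (R : realType) (n : nat) (eps : R) (x v : nat -> 'cV[R]_n) (k : nat) : Prop :=
  wl1 (v k.+1) (x k.+1) <= eps.

From mathcomp Require Import all_boot all_order all_algebra.
From mathcomp Require Import all_classical all_reals all_analysis.
From mathcomp Require Import lra.
Set Implicit Arguments. Unset Strict Implicit. Unset Printing Implicit Defensive.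
Import Order.TTheory GRing.Theory Num.Theory.
Local Open Scope ring_scope.

(* After step k every coordinate kept in the support of the weight vector has
   |x_i| <= 1/rho_k, so the weighted l1 value is at most n/rho_k; since
   rho_k = rho0 sigma^k grows geometrically, n/rho_k <= eps as soon as
   k >= (ln n - ln (eps rho0)) / ln sigma, so the test (S.3) succeeds then. *)

Lemma wl1_threshold_le (R : realType) (n : nat) (v x : 'cV[R]_n) (t : R) :
  0 <= t -> (forall i, v i 0 = if t < `|x i 0| then 0 else 1) ->
  wl1 v x <= n%:R * t.
Proof.
move=> t_ge0 vE; rewrite /wl1 mulr_natl -[n in t *+ n]card_ord -sumr_const.
apply: ler_sum => i _; rewrite vE.
by case: ifP => [_|/negbT]; rewrite ?mul0r ?mul1r // -leNgt.
Qed.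

Lemma le_mul_expr_of_ceil_ln (R : realType) (a c s : R) (k : nat) :
  0 < a -> 0 < c -> 1 < s ->
  (Num.ceil ((ln a - ln c) / ln s) <= k%:Z)%R -> a <= c * s ^+ k.
Proof.
move=> a_gt0 c_gt0 s_gt1 ceil_le_k.
have lns_gt0 : 0 < ln s by apply: ln_gt0.
have s_gt0 : 0 < s by apply: lt_trans s_gt1.
have ratio_le_k : (ln a - ln c) / ln s <= k%:R.
  apply: le_trans (ceil_ge _) _.
  by rewrite -[k%:R]/((k%:Z)%:~R) ler_int.
rewrite -ler_ln ?posrE ?mulr_gt0 ?exprn_gt0 //.
rewrite lnM ?posrE ?exprn_gt0 // lnXn // -mulr_natl.
by move: ratio_le_k; rewrite ler_pdivrMr //; lra.
Qed.

Theorem theorem3p2 (R : realType) (m n : nat) (A : 'M[R]_(m, n)) (b : 'cV[R]_m)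
  (delta eps sigma rho0 : R) (x v : nat -> 'cV[R]_n) (rho : nat -> R) :
  (0 < n)%N -> 0 <= delta -> (exists y, feasible A b delta y) ->
  0 < eps -> 1 < sigma -> 0 < rho0 ->
  EPD_run A b delta sigma rho0 x v rho ->
  exists k : nat, EPD_stops eps x v k /\
    (k%:Z <= Num.max 0 (Num.ceil ((ln n%:R - ln (eps * rho0)) / ln sigma)))%R.
Proof.
move=> n_gt0 _ _ eps_gt0 sigma_gt1 rho0_gt0 [_ rhoE _ vE].
set K := Num.max 0 _.
have K_ge0 : (0 <= K)%R by rewrite le_max lexx.
exists `|K|%N; rewrite gez0_abs //; split=> //.
have rho_gt0 : 0 < rho `|K|%N.
  by rewrite rhoE mulr_gt0 ?exprn_gt0 // (lt_trans ltr01).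
have n_le : n%:R <= eps * rho `|K|%N.
  rewrite rhoE mulrA; apply: le_mul_expr_of_ceil_ln; rewrite ?ltr0n ?mulr_gt0 //.
  by rewrite gez0_abs // le_max lexx orbT.
rewrite /EPD_stops (le_trans (wl1_threshold_le _ (vE _))) //.
  by rewrite invr_ge0 ltW.
by rewrite ler_pdivrMr.
Qed.
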